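(* Let $A$ be a finitely generated $K$-algebra and $\mathcal{F}=\{V_n\}$ a filtration of $A$ with $\mathrm{h}_{\mathrm{alg}}(A,\mathcal{F})=0$. Then: (1) for any filtration $\mathcal{G}=\{W_n\}$ of $A$ with $W_n\subseteq V_n$ for all $n$, $\mathrm{h}_{\mathrm{alg}}(A,\mathcal{G})=0$; (2) for a fixed $k$, the filtration $\mathcal{G}=\{W_n\}$ with $W_n:=V_{nk}$ satisfies $\mathrm{h}_{\mathrm{alg}}(A,\mathcal{G})=0$; (3) for any filtration $\mathcal{G}=\{W_n\}$ of $A$ such that $W_1$ is finite-dimensional and $W_k=(W_1)^k$ for every $k$, one has $\mathrm{h}_{\mathrm{alg}}(A,\mathcal{G})=0$.
   Context: A filtration of a $K$-algebra $A$ is a family $\{V_n\}_{n\ge0}$ of subspaces with $0=V_0\subseteq V_1\subseteq\cdots$, $A=\bigcup_nV_n$ and $V_nV_m\subseteq V_{n+m}$; the quotients $V_n/V_{n-1}$ are assumed finite-dimensional. The algebraic entropy is $\mathrm{h}_{\mathrm{alg}}(A,\mathcal{F})=0$ if $A$ is finite-dimensional and otherwise $\limsup_{n\to\infty}\frac{\log\dim(V_n/V_{n-1})}{n}$. For a subspace $W$, $W^k$ denotes the linear span of products of $k$ elements of $W$. *)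

From HB Require Import structures.
From mathcomp Require Import all_boot all_order all_algebra.
From mathcomp Require Import classical_sets boolp reals ereal exp sequences.
Set Implicit Arguments. Unset Strict Implicit. Unset Printing Implicit Defensive.
Import Order.TTheory GRing.Theory Num.Theory.
Local Open Scope ring_scope.

Section AlgEntropy.
Variables (K : fieldType) (A : algType K).

Definition is_subspace (V : A -> Prop) : Prop :=
  [/\ V 0, (forall x y, V x -> V y -> V (x + y)) & (forall (c : K) x, V x -> V (c *: x)) ].

Definition spans_mod (V W : A -> Prop) (s : seq A) : Prop :=
  (forall x, x \in s -> V x) /\
  forall v, V v -> exists c : 'I_(size s) -> K, W (v - \sum_(i < size s) c i *: s`_i).

(** dim (V / W): least size of a spanning list of V modulo W (0 if none exists;
    only used when it exists). *)
Definition qdim (V W : A -> Prop) : nat :=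
  xget 0%N (fun n : nat => exists s, size s = n /\ spans_mod V W s /\
                         forall s', spans_mod V W s' -> (n <= size s')%N).

Definition finite_dim (V : A -> Prop) : Prop :=
  exists s, spans_mod V (fun x => x = 0) s.

Definition filtration (V : nat -> A -> Prop) : Prop :=
  (forall n, is_subspace (V n)) /\
  (forall x, V 0%N x <-> x = 0) /\
  (forall n x, V n x -> V n.+1 x) /\
  (forall x, exists n, V n x) /\
  (forall n m x y, V n x -> V m y -> V (n + m)%N (x * y)) /\
  (forall n, exists s, spans_mod (V n.+1) (V n) s).

Definition is_subalgebra (S : A -> Prop) : Prop :=
  [/\ is_subspace S, S 1 & (forall x y, S x -> S y -> S (x * y))].

Definition fin_gen_algebra : Prop :=
  exists g : seq A, forall S, is_subalgebra S -> (forall x, x \in g -> S x) ->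
    forall x, S x.

(** W^k: linear span of the products of k elements of W. *)
Definition pow_span (W : A -> Prop) (k : nat) (x : A) : Prop :=
  exists r : seq (K * seq A),
    (forall p, p \in r -> size p.2 = k /\ forall w, w \in p.2 -> W w) /\
    x = \sum_(p <- r) p.1 *: \prod_(w <- p.2) w.

(** Algebraic entropy (extended-real valued): 0 if A is finite-dimensional,
    otherwise limsup_n log(dim (V_n/V_(n-1))) / n.  (ln 0 = 0 in MathComp;
    this does not affect the limsup, which is >= 0 when A is infinite-dim.) *)
Definition h_alg (R : realType) (V : nat -> A -> Prop) : \bar R :=
  if `[< finite_dim (fun _ => True) >] then 0%E
  else limn_esup (fun n : nat =>
         ((ln ((qdim (V n) (V n.-1))%:R : R)) / n%:R)%:E).
End AlgEntropy.

From HB Require Import structures.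
From mathcomp Require Import all_boot all_order all_algebra.
From mathcomp Require Import classical_sets boolp reals ereal exp sequences.
Set Implicit Arguments. Unset Strict Implicit. Unset Printing Implicit Defensive.
Import Order.TTheory GRing.Theory Num.Theory.
Local Open Scope ring_scope.

(* Write d_n for dim (V_n / V_(n-1)).  Zero entropy says exactly that d_n grows
   subexponentially: for every e > 0, d_n <= C e^(e n).  Then so does
   dim V_n <= d_0 + ... + d_n.  If every W_n lies in V_(nm), a Steinitz exchange
   bounds dim (W_n / W_(n-1)) <= dim W_n <= dim V_(nm), which is again
   subexponential in n, so W has zero entropy.  Parts (1) and (2) are the cases
   m = 1 and W_n = V_(nk); in part (3) a finite basis of W_1 lies in some V_m,
   hence W_n = W_1^n lies in V_(nm). *)

Section LimsupEventually.
Variable R : realType.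
Implicit Types (u : (\bar R)^nat) (a : \bar R).

Lemma limn_esupE u : limn_esup u = ereal_inf (range (esups u)).
Proof. by rewrite limn_esup_lim; apply/cvg_lim => //; exact: cvg_esups_inf. Qed.

Lemma limn_esup_ge0 u : (forall n, 0 <= u n)%E -> (0 <= limn_esup u)%E.
Proof.
move=> u_ge0; rewrite limn_esupE; apply: le_ereal_inf_tmp => _ [n _ <-].
by apply: le_trans (u_ge0 n) _; apply: ereal_sup_ubound; exists n => /=.
Qed.

Lemma limn_esup_le_eventually u a N :
  (forall n, (N <= n)%N -> u n <= a)%E -> (limn_esup u <= a)%E.
Proof.
move=> ua; rewrite limn_esupE; apply: le_trans (_ : esups u N <= _)%E.
  by apply: ereal_inf_lbound; exists N.
by apply: ge_ereal_sup => _ [n /= Nn <-]; exact: ua.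
Qed.

Lemma limn_esup_lt_eventually u a :
  (limn_esup u < a)%E -> exists N, forall n, (N <= n)%N -> (u n < a)%E.
Proof.
rewrite limn_esupE => /ereal_inf_lt [_ [N _ <-]] supa; exists N => n Nn.
by apply: le_lt_trans supa; apply: ereal_sup_ubound; exists n.
Qed.

End LimsupEventually.

Section Subexponential.
Variable R : realType.
Implicit Types f g : nat -> nat.

Definition subexponential f := forall e : R, 0 < e ->
  exists C : R, forall n, (f n)%:R <= C * expR e ^+ n.

Definition log_rate f n : \bar R := (ln ((f n)%:R : R) / n%:R)%:E.

Lemma log_rate_ge0 f n : (0 <= log_rate f n)%E.
Proof.
rewrite lee_fin divr_ge0 //; case: (f n) => [|k]; first by rewrite ln0.
by apply: ln_ge0; rewrite ler1n.
Qed.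

Lemma subexponential_of_limn_esup f :
  (limn_esup (log_rate f) <= 0)%E -> subexponential f.
Proof.
move=> f_le0 e e_gt0.
have [N fN] : exists N, forall n, (N <= n)%N -> (log_rate f n < e%:E)%E.
  by apply: limn_esup_lt_eventually; apply: le_lt_trans f_le0 _; rewrite lte_fin.
exists (1 + (\sum_(i < N.+1) f i)%N%:R) => n.
have e_ge1 : 1 <= expR e ^+ n by rewrite exprn_ege1 // -expR0 ler_expR ltW.
have [nN|Nn] := leqP n N.
  apply: le_trans (_ : 1 + (\sum_(i < N.+1) f i)%N%:R <= _); last first.
    by rewrite ler_peMr // addr_ge0.
  apply: le_trans (_ : (\sum_(i < N.+1) f i)%N%:R <= _); last by rewrite lerDr.
  by rewrite ler_nat (bigD1 (Ordinal (nN : (n < N.+1)%N))) //= leq_addr.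
have [->|fn_gt0] := posnP (f n).
  by rewrite mulr_ge0 // ?addr_ge0 // (le_trans _ e_ge1).
have n_gt0 : (0 < n%:R :> R) by rewrite ltr0n (leq_ltn_trans _ Nn).
have := fN n (ltnW Nn); rewrite lte_fin ltr_pdivrMr // -ltr_expR lnK ?posrE ?ltr0n //.
rewrite -expRM_natr => /ltW /le_trans; apply.
by rewrite ler_peMl ?expR_ge0 // lerDl.
Qed.

Lemma limn_esup_le0_of_subexponential f :
  subexponential f -> (limn_esup (log_rate f) <= 0)%E.
Proof.
move=> f_sub; apply/lee_addgt0Pr => e e_gt0; rewrite add0e.
have e2_gt0 : 0 < e / 2 by rewrite divr_gt0.
have [C fC] := f_sub _ e2_gt0.
pose N := (Num.truncn (`|ln C| / (e / 2))).+1.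
apply: (@limn_esup_le_eventually _ _ _ N) => n Nn.
rewrite /log_rate; have [->|fn_gt0] := posnP (f n).
  by rewrite ln0 // mul0r lee_fin ltW.
have n_gt0 : (0 < n%:R :> R) by rewrite ltr0n (leq_trans _ Nn).
have C_gt0 : 0 < C.
  have fn_gt0' : 0 < (f n)%:R :> R by rewrite ltr0n.
  by have := lt_le_trans fn_gt0' (fC n); rewrite pmulr_lgt0 ?exprn_gt0 ?expR_gt0.
have lnC_le : `|ln C| <= e / 2 * n%:R.
  have := truncnS_gt (`|ln C| / (e / 2)); rewrite -/N ltr_pdivrMr // => /ltW/le_trans.
  by apply; rewrite mulrC ler_pM2l // ler_nat.
rewrite lee_fin ler_pdivrMr //.
apply: le_trans (_ : ln (C * expR (e / 2) ^+ n) <= _).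
  by rewrite ler_ln ?posrE ?ltr0n ?mulr_gt0 ?exprn_gt0 ?expR_gt0.
rewrite lnM ?posrE ?exprn_gt0 ?expR_gt0 // -expRM_natr expRK.
by rewrite [e in _ <= e * _]splitr mulrDl lerD2r (le_trans (ler_norm _)).
Qed.

Lemma geometric_sum_le (b : R) n : 1 < b ->
  \sum_(i < n) b ^+ i <= b ^+ n / (b - 1).
Proof.
move=> b_gt1; have b1_gt0 : 0 < b - 1 by rewrite subr_gt0.
by rewrite ler_pdivlMr // mulrC -subrX1 gerBl.
Qed.

Lemma subexponential_partial_sum f :
  subexponential f -> subexponential (fun n => (\sum_(i < n.+1) f i)%N).
Proof.
move=> f_sub e e_gt0; have [C fC] := f_sub e e_gt0.
have b_gt1 : 1 < expR e by rewrite -expR0 ltr_expR.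
have C_ge0 : 0 <= C by have := fC 0%N; rewrite expr0 mulr1; apply: le_trans.
exists (C * (expR e / (expR e - 1))) => n; rewrite natr_sum.
apply: le_trans (_ : \sum_(i < n.+1) C * expR e ^+ i <= _); first exact: ler_sum.
rewrite -mulr_sumr -mulrA ler_wpM2l //.
by apply: le_trans (geometric_sum_le n.+1 b_gt1) _; rewrite exprS mulrAC.
Qed.

Lemma subexponential_rescale f g m : (0 < m)%N -> subexponential f ->
  (forall n, g n <= f (n * m))%N -> subexponential g.
Proof.
move=> m_gt0 f_sub gf e e_gt0.
have m_gt0' : (0 < m%:R :> R) by rewrite ltr0n.
have [C fC] := f_sub (e / m%:R) (divr_gt0 e_gt0 m_gt0').
exists C => n; apply: le_trans (_ : (f (n * m)%N)%:R <= _); first by rewrite ler_nat.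
by apply: le_trans (fC _) _; rewrite mulnC exprM -expRM_natr divfK ?gt_eqF.
Qed.

End Subexponential.

Section Span.
Variables (K : fieldType) (A : algType K).
Implicit Types (s t : seq A) (U W : A -> Prop).

Fixpoint in_span s (x : A) : Prop :=
  if s is a :: s' then exists k y, in_span s' y /\ x = k *: a + y else x = 0.

Definition spans U s := (forall x, x \in s -> U x) /\ forall u, U u -> in_span s u.

Lemma in_span0 s : in_span s 0.
Proof. by elim: s => [|a s IH] //=; exists 0, 0; rewrite scale0r addr0. Qed.

Lemma in_spanD s x y : in_span s x -> in_span s y -> in_span s (x + y).
Proof.
elim: s x y => [|a s IH] x y /=; first by move=> -> ->; rewrite addr0.
move=> [k [x' [sx' ->]]] [l [y' [sy' ->]]]; exists (k + l), (x' + y').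
by split; [exact: IH | rewrite scalerDl addrACA].
Qed.

Lemma in_spanZ s c x : in_span s x -> in_span s (c *: x).
Proof.
elim: s x => [|a s IH] x /=; first by move=> ->; rewrite scaler0.
move=> [k [x' [sx' ->]]]; exists (c * k), (c *: x').
by split; [exact: IH | rewrite scalerDr scalerA].
Qed.

Lemma in_span_cat s t x y : in_span s x -> in_span t y -> in_span (s ++ t) (x + y).
Proof.
elim: s x => [|a s IH] x /=; first by move=> ->; rewrite add0r.
move=> [k [x' [sx' ->]]] ty; exists k, (x' + y).
by split; [exact: IH | rewrite addrA].
Qed.

Lemma is_subspace_span s : is_subspace (in_span s).
Proof. by split; [exact: in_span0 | exact: in_spanD | exact: in_spanZ]. Qed.

Lemma is_subspaceI U W : is_subspace U -> is_subspace W ->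
  is_subspace (fun x => U x /\ W x).
Proof.
move=> [U0 UD UZ] [W0 WD WZ]; split=> // [x y [Ux Wx] [Uy Wy]|c x [Ux Wx]].
  by split; [exact: UD | exact: WD].
by split; [exact: UZ | exact: WZ].
Qed.

Lemma in_span_subspace U s x : is_subspace U -> (forall y, y \in s -> U y) ->
  in_span s x -> U x.
Proof.
move=> [U0 UD UZ]; elim: s x => [|a s IH] x /=; first by move=> _ ->.
move=> sU [k [y [sy ->]]]; apply: UD; first by apply/UZ/sU; rewrite mem_head.
by apply: IH => // z zs; apply: sU; rewrite in_cons zs orbT.
Qed.

Lemma in_spanP s x :
  in_span s x <-> exists c : 'I_(size s) -> K, x = \sum_(i < size s) c i *: s`_i.
Proof.
elim: s x => [|a s IH] x /=.
  by split=> [->|[c ->]]; [exists (fun _ => 0); rewrite big_ord0 | rewrite big_ord0].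
split=> [[k [y [/IH [c ->] ->]]]|[c ->]].
  exists (fun i => if unlift ord0 i is Some j then c j else k).
  rewrite big_ord_recl /= unlift_none; congr (_ + _).
  by apply: eq_bigr => i _; rewrite liftK.
rewrite big_ord_recl /=; exists (c ord0), (\sum_(i < size s) c (lift ord0 i) *: s`_i).
by split=> //; apply/IH; exists (fun i => c (lift ord0 i)).
Qed.

Lemma spans_modP U W s : spans_mod U W s <->
  (forall x, x \in s -> U x) /\ forall u, U u -> exists2 y, in_span s y & W (u - y).
Proof.
split=> -[sU Us]; split=> // u /Us.
  by move=> [c Wc]; exists (\sum_(i < size s) c i *: s`_i) => //; apply/in_spanP; exists c.
by move=> [y /in_spanP [c ->] Wy]; exists c.
Qed.

Lemma spans_spans_mod U W s : is_subspace W -> spans U s -> spans_mod U W s.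
Proof.
move=> [W0 _ _] [sU Us]; apply/spans_modP; split=> // u Uu.
by exists u; [exact: Us | rewrite subrr].
Qed.

Lemma finite_dim_spans U : finite_dim U -> exists s, spans U s.
Proof.
move=> [s /spans_modP [sU Us]]; exists s; split=> // u /Us [y sy /eqP].
by rewrite subr_eq0 => /eqP ->.
Qed.

(* Steinitz exchange: pick u0 in U with a nonzero first coordinate a, if any,
   and recurse on the part of U spanned by the tail of s. *)
Lemma spans_subspace_of_span U s : is_subspace U -> (forall u, U u -> in_span s u) ->
  exists2 t, (size t <= size s)%N & spans U t.
Proof.
elim: s U => [|a s IH] U U_sub Us.
  by exists [::] => //; split=> // u /Us.
have [[u0 [k [y [Uu0 sy u0E k_neq0]]]]|] :=
  pselect (exists u0 k y, [/\ U u0, in_span s y, u0 = k *: a + y & k != 0]).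
  have [t st [tU Ut]] :=
    IH _ (is_subspaceI U_sub (is_subspace_span s)) (fun u Uu => Uu.2).
  exists (u0 :: t); first by rewrite /= ltnS.
  split=> [x|u Uu]; first by rewrite in_cons => /orP [/eqP -> // | /tU []].
  have [d [z [sz uE]]] := Us u Uu.
  exists (d / k), (u - (d / k) *: u0); split; last by rewrite addrC subrK.
  apply: Ut; have [_ UD UZ] := U_sub; split.
    by apply: UD => //; rewrite -scaleNr; apply: UZ.
  have -> : u - (d / k) *: u0 = z - (d / k) *: y.
    by rewrite uE u0E scalerDr scalerA divfK // opprD addrACA addrC subrr addr0.
  by apply: in_spanD => //; rewrite -scaleNr; apply: in_spanZ.
move=> no_u0; have Us' u : U u -> in_span s u.
  move=> Uu; have [k [y [sy uE]]] := Us u Uu.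
  have [k0|k_neq0] := eqVneq k 0; first by rewrite uE k0 scale0r add0r.
  by case: no_u0; exists u, k, y.
have [t st Ut] := IH U U_sub Us'.
by exists t => //; apply: leq_trans st _.
Qed.

Lemma qdim_spanning U W : (exists s, spans_mod U W s) ->
  (exists2 s, size s = qdim U W & spans_mod U W s) /\
  (forall s, spans_mod U W s -> (qdim U W <= size s)%N).
Proof.
move=> exs.
have ex_size : exists n, `[< exists2 s, size s = n & spans_mod U W s >].
  by case: exs => s Us; exists (size s); apply/asboolP; exists s.
case: (ex_minnP ex_size) => n /asboolP [s sz Us] min_n.
have [|t [tn [Ut min_t]]] := xgetPex 0%N (P := fun n : nat => exists s, size s = n /\
  spans_mod U W s /\ forall s', spans_mod U W s' -> (n <= size s')%N).
  exists n, s; split=> //; split=> // s' Us'.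
  by apply: min_n; apply/asboolP; exists s'.
by split; [exists t | exact: min_t].
Qed.

Lemma qdim_le U W s : spans_mod U W s -> (qdim U W <= size s)%N.
Proof. by move=> Us; apply: (qdim_spanning (ex_intro _ s Us)).2. Qed.

End Span.

Section Filtration.
Variables (K : fieldType) (A : algType K).
Implicit Types (V W : nat -> A -> Prop).

Definition graded_dim V n := qdim (V n) (V n.-1).

Lemma filtration_mono V m n x : filtration V -> (m <= n)%N -> V m x -> V n x.
Proof.
move=> [_ [_ [VS _]]] mn Vmx; elim: n mn => [|n IH]; first by rewrite leqn0 => /eqP <-.
by rewrite leq_eqVlt => /orP [/eqP <- // | /IH /VS].
Qed.

Lemma filtration_spans V n : filtration V ->
  exists2 s, (size s <= \sum_(i < n.+1) graded_dim V i)%N & spans (V n) s.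
Proof.
move=> [_ [V0 [VS [_ [_ V_gr]]]]].
elim: n => [|n [s s_le [sV Vs]]]; first by exists [::] => //; split=> // v /V0.
have [[t t_size /spans_modP [tV Vt]] _] := qdim_spanning (V_gr n).
exists (t ++ s); first by rewrite size_cat big_ord_recr /= addnC leq_add // t_size.
split=> [x|v /Vt [y ty /Vs sv]]; first by rewrite mem_cat => /orP [/tV | /sV /VS].
by have := in_span_cat ty sv; rewrite addrC subrK.
Qed.

Lemma subexponential_graded_dim_rescale (R : realType) V W m : filtration V ->
  subexponential R (graded_dim V) -> (forall n, is_subspace (W n)) -> (0 < m)%N ->
  (forall n x, W n x -> V (n * m)%N x) -> subexponential R (graded_dim W).
Proof.
move=> V_filt V_sub W_sub m_gt0 WV.
apply: (subexponential_rescale m_gt0 (subexponential_partial_sum V_sub)) => n.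
have [s s_le [_ Vs]] := filtration_spans (n * m) V_filt.
have [t t_le Wt] := spans_subspace_of_span (W_sub n) (fun u Wu => Vs _ (WV _ _ Wu)).
apply: leq_trans s_le; apply: leq_trans t_le.
exact/qdim_le/spans_spans_mod.
Qed.

Lemma h_alg_eq0_rescale (R : realType) V W m : filtration V -> h_alg R V = 0%E ->
  (forall n, is_subspace (W n)) -> (0 < m)%N ->
  (forall n x, W n x -> V (n * m)%N x) -> h_alg R W = 0%E.
Proof.
rewrite /h_alg; case: asboolP => // _ V_filt V_h W_sub m_gt0 WV.
apply/le_anti/andP; split; last exact/limn_esup_ge0/log_rate_ge0.
apply: (limn_esup_le0_of_subexponential (f := graded_dim W)).
apply: subexponential_graded_dim_rescale V_filt _ W_sub m_gt0 WV.
by apply: subexponential_of_limn_esup; rewrite [X in (X <= _)%E]V_h.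
Qed.

Lemma filtration_bound_seq V (g : seq A) : filtration V ->
  exists2 m, (0 < m)%N & forall x, x \in g -> V m x.
Proof.
move=> V_filt; have [_ [_ [_ [V_cover _]]]] := V_filt.
elim: g => [|a g [m m_gt0 gV]]; first by exists 1%N.
have [k Vka] := V_cover a.
exists (maxn m k) => [|x]; first by rewrite leq_max m_gt0.
rewrite in_cons => /orP [/eqP -> | /gV Vmx].
  by apply: filtration_mono Vka => //; rewrite leq_maxr.
by apply: filtration_mono Vmx => //; rewrite leq_maxl.
Qed.

Lemma filtration_prod V m (w : A) (l : seq A) : filtration V ->
  V m w -> (forall x, x \in l -> V m x) -> V ((size l).+1 * m)%N (\prod_(x <- w :: l) x).
Proof.
move=> [_ [_ [_ [_ [VM _]]]]].
elim: l w => [|w' l IH] w Vw lV; first by rewrite big_cons big_nil mulr1 mul1n.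
rewrite big_cons mulSn; apply: VM => //; apply: IH => [|x xl].
  by apply: lV; rewrite mem_head.
by apply: lV; rewrite in_cons xl orbT.
Qed.

Lemma subspace_sum (U : A -> Prop) (I : eqType) (r : seq I) (F : I -> A) :
  is_subspace U -> (forall i, i \in r -> U (F i)) -> U (\sum_(i <- r) F i).
Proof. by move=> [U0 UD _] rU; rewrite big_seq; apply: big_ind. Qed.

Lemma pow_span_filtration V (W1 : A -> Prop) m k x : filtration V ->
  (forall w, W1 w -> V m w) -> (0 < k)%N -> pow_span W1 k x -> V (k * m)%N x.
Proof.
move=> V_filt W1V k_gt0 [r [rW1 ->]]; have [V_sub _] := V_filt.
apply: subspace_sum => // -[c [|w l]] /rW1 /= [l_size lW1].
  by rewrite -l_size in k_gt0.
have [_ _ VZ] := V_sub (k * m)%N; apply: VZ; rewrite -l_size.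
apply: filtration_prod => [||y yl]; [exact: V_filt | exact/W1V/lW1/mem_head |].
by apply/W1V/lW1; rewrite in_cons yl orbT.
Qed.

Lemma pow_filtration_rescale V W : filtration V -> filtration W -> finite_dim (W 1%N) ->
  (forall k x, (0 < k)%N -> (W k x <-> pow_span (W 1%N) k x)) ->
  exists2 m, (0 < m)%N & forall n x, W n x -> V (n * m)%N x.
Proof.
move=> V_filt [W_sub [W0 _]] /finite_dim_spans [g [gW1 W1g]] W_pow.
have [m m_gt0 gV] := filtration_bound_seq g V_filt.
have W1V w : W 1%N w -> V m w.
  by move/W1g; apply: in_span_subspace gV; exact: V_filt.1.
exists m => // -[|n] x; first by move/W0 ->; have [] := V_filt.1 0%N.
by move/(W_pow _ _ (ltn0Sn n)); apply: pow_span_filtration.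
Qed.

End Filtration.

Theorem proposition3p4 (R : realType) (K : fieldType) (A : algType K)
    (V : nat -> A -> Prop) :
  fin_gen_algebra A -> filtration V -> h_alg R V = 0%E ->
  [/\ (forall W : nat -> A -> Prop, filtration W ->
         (forall n x, W n x -> V n x) -> h_alg R W = 0%E),
      (forall k : nat, (0 < k)%N -> h_alg R (fun n => V (n * k)%N) = 0%E) &
      (forall W : nat -> A -> Prop, filtration W -> finite_dim (W 1%N) ->
         (forall k x, (0 < k)%N -> (W k x <-> pow_span (W 1%N) k x)) ->
         h_alg R W = 0%E) ].
Proof.
move=> _ V_filt V_h; split.
- move=> W [W_sub _] WV.
  by apply: (h_alg_eq0_rescale (m := 1%N)) V_filt V_h W_sub _ _ => // n x; rewrite muln1 => /WV.
- move=> k k_gt0; apply: (h_alg_eq0_rescale V_filt V_h _ k_gt0) => // n.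
  exact: V_filt.1.
- move=> W W_filt W1_fin W_pow.
  have [m m_gt0 WV] := pow_filtration_rescale V_filt W_filt W1_fin W_pow.
  exact: h_alg_eq0_rescale V_filt V_h W_filt.1 m_gt0 WV.
Qed.
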